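(* For every $n\in\mathbb{N}$ and every $\pi\in\mathfrak{S}_n$, $\operatorname{EV}(\Theta(\pi))=\operatorname{Des}(\pi)$.
   Context: For a word $\pi=a_1\cdots a_n$ with distinct positive integer letters, $\operatorname{Des}(\pi)=\{i\in[n-1]:a_i>a_{i+1}\}$. The increasing unordered tree $T'(\pi)$ has root labeled $0$ and vertices $a_1,\dots,a_n$: if $b$ is a right-to-left minimum of $\pi$ then $b$ is a child of the root; otherwise $b$ is a child of the leftmost letter $a$ to the right of $b$ with $a<b$. $\operatorname{EV}(\pi)$ is the set of indices $1\le i\le n$ such that $a_i$ has even height in $T'(\pi)$ (root at height $0$). The complement $\pi^c=b_1\cdots b_n$ is the word on the same letters with $a_i<a_j\iff b_i>b_j$ for all $i<j$. $\Theta$ is defined recursively: the empty word maps to itself, and if $\pi=\sigma m\tau$ with $m$ the smallest letter, $\Theta(\pi)=\Theta(\sigma^c)\,m\,\Theta(\tau)$. *)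

(* Words = seq nat with distinct positive letters; positions are 1-indexed
   in Des / EV as in the paper (internally nth uses 0-indexing). *)
From mathcomp Require Import all_boot.
Set Implicit Arguments. Unset Strict Implicit. Unset Printing Implicit Defensive.

Definition Des (w : seq nat) : seq nat :=
  [seq i <- iota 1 (size w).-1 | nth 0 w i < nth 0 w i.-1].

(* Parent in T'(w) of the letter at 0-indexed position i:
   None = the root 0 (letter is a right-to-left minimum);
   Some j = the leftmost letter to the right of position i that is smaller. *)
Definition parent (w : seq nat) (i : nat) : option nat :=
  let b := nth 0 w i in
  let suf := drop i.+1 w in
  let k := find (fun a => a < b) suf in
  if k < size suf then Some (i.+1 + k) else None.

(* Height (root has height 0) of the vertex at 0-indexed position i;
   fuel suffices since parents strictly move right. *)
Fixpoint height_aux (fuel : nat) (w : seq nat) (i : nat) : nat :=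
  match fuel with
  | 0 => 0
  | f.+1 => match parent w i with
            | None => 1
            | Some j => (height_aux f w j).+1
            end
  end.

Definition height (w : seq nat) (i : nat) : nat := height_aux (size w) w i.

Definition EV (w : seq nat) : seq nat :=
  [seq i <- iota 1 (size w) | ~~ odd (height w i.-1)].

(* Complement: same letters, order-reversed: the r-th smallest letter
   is replaced by the r-th largest. *)
Definition compl (w : seq nat) : seq nat :=
  let L := sort leq w in
  map (fun a => nth 0 L ((size w).-1 - index a L)) w.

Fixpoint Theta_aux (fuel : nat) (w : seq nat) : seq nat :=
  match fuel with
  | 0 => [::]
  | f.+1 =>
    match w with
    | [::] => [::]
    | x :: s =>
      let m := foldr minn x s in
      let i := index m w in
      Theta_aux f (compl (take i w)) ++ m :: Theta_aux f (drop i.+1 w)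
    end
  end.

Definition Theta (w : seq nat) : seq nat := Theta_aux (size w) w.

(* Split w = a ++ m :: b at its minimal letter m, so that
   Theta w = Theta (compl a) ++ m :: Theta b.  In the tree of this word, m is a
   child of the root, the letters of Theta (compl a) keep their parents except
   that the former children of the root now hang below m, and the letters of
   Theta b keep their parents.  Hence heights grow by one on the left block, are
   1 at m, and are unchanged on the right block.  By induction, position i of
   Theta w has even height iff w descends at i: on the left block the parity
   shift is undone by the complement, which exchanges the descents and ascents
   of a; the last letter of a descends to m; and m never descends. *)

From mathcomp Require Import all_boot zify.

Set Implicit Arguments.
Unset Strict Implicit.
Unset Printing Implicit Defensive.

Lemma mem_foldr_minn x s : foldr minn x s \in x :: s.
Proof.
elim: s => [|y s IH] /=; first exact: mem_head.
rewrite /minn; case: ltnP => _; first by rewrite !inE eqxx orbT.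
by move: IH; rewrite !inE => /orP[->|->]; rewrite ?orbT.
Qed.

Lemma foldr_minn_leq x s y : y \in x :: s -> foldr minn x s <= y.
Proof.
elim: s => [|z s IH] /=; first by rewrite inE => /eqP->.
rewrite !inE => /or3P[yx|/eqP->|ys].
- by rewrite (leq_trans (geq_minr _ _)) // IH // inE yx.
- exact: geq_minl.
- by rewrite (leq_trans (geq_minr _ _)) // IH // inE ys orbT.
Qed.

Lemma split_at_min (w : seq nat) : w != [::] ->
  exists a m b, [/\ w = a ++ m :: b, {in a, forall y, m < y} & {in b, forall y, m <= y}].
Proof.
case: w => // x s _; set w := x :: s; set m := foldr minn x s.
have mw : m \in w := mem_foldr_minn x s.
have m_min : {in w, forall y, m <= y} := @foldr_minn_leq x s.
exists (take (index m w) w), m, (drop (index m w).+1 w); split.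
- by rewrite -[LHS](cat_take_drop (index m w)) (drop_nth m) ?index_mem ?nth_index.
- move=> y ya; rewrite ltn_neqAle m_min ?(mem_take ya) // andbT.
  by apply: contraTneq ya => <-; apply/negP => /index_ltn; rewrite ltnn.
- by move=> y yb; rewrite m_min ?(mem_drop yb).
Qed.

Lemma size_compl s : size (compl s) = size s.
Proof. exact: size_map. Qed.

Lemma mem_compl s y : y \in compl s -> y \in s.
Proof.
case/mapP=> x xs ->; rewrite -(mem_sort leq) mem_nth // size_sort.
by case: s xs => //= z s _; rewrite ltnS leq_subr.
Qed.

Lemma ltn_nth_sorted (L : seq nat) p q : sorted ltn L -> p < size L -> q < size L ->
  (nth 0 L p < nth 0 L q) = (p < q).
Proof.
move=> sL lt_p lt_q; have homo := sorted_ltn_nth ltn_trans 0 sL.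
case: (ltngtP p q) => [lt_pq|lt_qp|->]; last exact: ltnn.
- exact: homo.
- by apply/negbTE; rewrite -leqNgt ltnW // homo.
Qed.

Lemma ltn_nth_compl (s : seq nat) i j : uniq s -> i < size s -> j < size s ->
  (nth 0 (compl s) i < nth 0 (compl s) j) = (nth 0 s j < nth 0 s i).
Proof.
move=> us lt_i lt_j; rewrite /compl !(nth_map 0) //.
set L := sort leq s.
have sL : sorted ltn L by rewrite ltn_sorted_uniq_leq sort_uniq us sort_sorted //; exact: leq_total.
have size_L : size L = size s by rewrite size_sort.
have [xL yL] : nth 0 s i \in L /\ nth 0 s j \in L by rewrite !mem_sort !mem_nth.
transitivity (nth 0 L (index (nth 0 s j) L) < nth 0 L (index (nth 0 s i) L)); last by rewrite !nth_index.
move: xL yL; rewrite -!index_mem size_L => lt_x lt_y.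
by rewrite !ltn_nth_sorted ?size_L //; try apply/idP/idP; lia.
Qed.

Lemma compl_uniq (s : seq nat) : uniq s -> uniq (compl s).
Proof.
move=> us; apply/(uniqP 0) => i j; rewrite !inE size_compl => lt_i lt_j eq_ij.
apply/eqP; rewrite -(nth_uniq 0 lt_i lt_j us).
case: (ltngtP (nth 0 s i) (nth 0 s j)) => // lt.
- by move: (ltn_nth_compl us lt_j lt_i); rewrite lt eq_ij ltnn.
- by move: (ltn_nth_compl us lt_i lt_j); rewrite lt eq_ij ltnn.
Qed.

Definition des (w : seq nat) (i : nat) : bool :=
  (i.+1 < size w) && (nth 0 w i.+1 < nth 0 w i).

Lemma des_compl (s : seq nat) i : uniq s -> des (compl s) i = (i.+1 < size s) && ~~ des s i.
Proof.
rewrite /des size_compl => us; case: ltnP => //= lt_i.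
rewrite ltn_nth_compl ?(ltnW lt_i) // -leqNgt ltn_neqAle nth_uniq ?(ltnW lt_i) //.
by rewrite (ltn_eqF (ltnSn i)).
Qed.

Lemma parent_lt w i j : parent w i = Some j -> i < j < size w.
Proof.
rewrite /parent size_drop; case: ifP => // lt_find [<-].
by apply/andP; split; lia.
Qed.

Lemma height_aux_fuel f g w i : 0 < f -> 0 < g -> size w - i <= f -> size w - i <= g ->
  height_aux f w i = height_aux g w i.
Proof.
elim: f g i => [|f IH] [|g] i //= _ _ le_f le_g.
case E: (parent w i) => [j|] //; have /andP[lt_ij lt_j] := parent_lt E.
by congr S; apply: IH; lia.
Qed.

Section SplitAtMin.
Variables (a b : seq nat) (m : nat).
Hypothesis gt_a : {in a, forall y, m < y}.
Hypothesis ge_b : {in b, forall y, m <= y}.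

Lemma parent_catl i : i < size a ->
  parent (a ++ m :: b) i = if parent a i is Some j then Some j else Some (size a).
Proof.
move=> lt_i; rewrite /parent nth_cat lt_i.
have -> : drop i.+1 (a ++ m :: b) = drop i.+1 a ++ m :: b.
  by rewrite drop_cat; case: ltnP => // ?; rewrite (_ : i.+1 = size a) ?subnn ?drop_size //; lia.
rewrite find_cat -has_find size_cat size_drop.
case E: has => /=.
  by move: E; rewrite has_find size_drop => ?; rewrite ifT //; lia.
by rewrite gt_a ?mem_nth //= ifT; [congr Some|]; lia.
Qed.

Lemma parent_cat_min : parent (a ++ m :: b) (size a) = None.
Proof.
rewrite /parent nth_cat ltnn subnn drop_cat (ltn_geF (leqnSn _)) subSnn /= drop0 -has_find.
by case: hasP => // -[y /ge_b]; rewrite ltnNge => ->.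
Qed.

Lemma parent_catr j :
  parent (a ++ m :: b) ((size a).+1 + j) = omap (addn (size a).+1) (parent b j).
Proof.
rewrite /parent nth_cat drop_cat.
have [-> ->] : ((size a).+1 + j < size a = false) /\ (((size a).+1 + j).+1 < size a = false).
  by split; lia.
have -> : (size a).+1 + j - size a = j.+1 by lia.
have -> : ((size a).+1 + j).+1 - size a = j.+2 by lia.
by case: ifP => //= _; congr Some; lia.
Qed.

Lemma height_aux_catl f i : i < size a ->
  height_aux f.+1 (a ++ m :: b) i = (height_aux f a i).+1.
Proof.
elim: f i => [|f IH] i lt_i /=; rewrite parent_catl //.
  by case: (parent a i).
case E: (parent a i) => [j|] /=; last by rewrite parent_cat_min.
by have /andP[_ lt_j] := parent_lt E; rewrite -IH.
Qed.

Lemma height_aux_catr f j :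
  height_aux f (a ++ m :: b) ((size a).+1 + j) = height_aux f b j.
Proof.
elim: f j => [|f IH] j //=; rewrite parent_catr.
by case: (parent b j) => [k|] //=; rewrite IH.
Qed.

Lemma height_catl i : i < size a -> height (a ++ m :: b) i = (height a i).+1.
Proof.
move=> lt_i; rewrite /height size_cat /= addnS height_aux_catl //.
by congr S; apply: height_aux_fuel; lia.
Qed.

Lemma height_cat_min : height (a ++ m :: b) (size a) = 1.
Proof. by rewrite /height size_cat /= addnS /= parent_cat_min. Qed.

Lemma height_catr j : j < size b -> height (a ++ m :: b) ((size a).+1 + j) = height b j.
Proof.
by move=> lt_j; rewrite /height height_aux_catr; apply: height_aux_fuel; rewrite ?size_cat /=; lia.
Qed.

Lemma Theta_aux_cat_min f :
  Theta_aux f.+1 (a ++ m :: b) = Theta_aux f (compl a) ++ m :: Theta_aux f b.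
Proof.
have m_notin_a : m \notin a by apply/negP => /gt_a; rewrite ltnn.
have index_m : index m (a ++ m :: b) = size a by rewrite index_cat (negbTE m_notin_a) /= eqxx addn0.
case E: (a ++ m :: b) => [|x s]; first by case: (a) E.
cbn [Theta_aux]; have -> : foldr minn x s = m.
  apply/eqP; rewrite eqn_leq foldr_minn_leq -?E ?mem_cat ?mem_head ?orbT //=.
  move: (mem_foldr_minn x s); rewrite -E mem_cat inE => /or3P[/gt_a/ltnW|/eqP->|/ge_b] //.
rewrite -E index_m take_size_cat // -[a ++ m :: b]cat_rcons drop_size_cat //.
by rewrite size_rcons.
Qed.

Lemma des_catl i : uniq a -> i < size a -> des (a ++ m :: b) i = ~~ des (compl a) i.
Proof.
move=> ua lt_i; rewrite des_compl // negb_and negbK /des size_cat !nth_cat lt_i.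
case: (ltngtP i.+1 (size a)) => [lt_i1|gt_i1|eq_i1] /=.
- by rewrite (ltn_addr _ lt_i1).
- by move: gt_i1; rewrite ltnS leqNgt lt_i.
- by rewrite eq_i1 subnn /= gt_a ?mem_nth // andbT addnS ltnS leq_addr.
Qed.

Lemma des_cat_min : des (a ++ m :: b) (size a) = false.
Proof.
rewrite /des !nth_cat ltnn subnn.
have -> : (size a).+1 < size a = false by lia.
rewrite subSnn /=.
case: b ge_b => [|y b'] ge_b' /=; first by rewrite size_cat addn1 ltnn.
by rewrite [y < m]ltnNge ge_b' ?mem_head ?andbF.
Qed.

Lemma des_catr j : des (a ++ m :: b) ((size a).+1 + j) = des b j.
Proof.
rewrite /des size_cat !nth_cat.
have [-> ->] : ((size a).+1 + j).+1 < size a = false /\ (size a).+1 + j < size a = false.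
  by split; lia.
have [-> ->] : ((size a).+1 + j).+1 - size a = j.+2 /\ (size a).+1 + j - size a = j.+1.
  by split; lia.
by congr (_ && _); apply/idP/idP => /=; lia.
Qed.

End SplitAtMin.

Lemma min_split_ind (P : seq nat -> Prop) : P [::] ->
  (forall (a : seq nat) (m : nat) (b : seq nat),
     {in a, forall y, m < y} -> {in b, forall y, m <= y} ->
     P (compl a) -> P b -> P (a ++ m :: b)) ->
  forall w, P w.
Proof.
move=> P0 Pcat w; have [n] := ubnP (size w); elim: n w => // n IH w lt_w.
have [->//|/split_at_min[a [m [b [Ew gt_a ge_b]]]]] := eqVneq w [::].
move: lt_w; rewrite Ew size_cat /= => lt_w.
by apply: Pcat => //; apply: IH; rewrite ?size_compl; lia.
Qed.

Lemma Theta_aux_fuel f g w : size w <= f -> size w <= g -> Theta_aux f w = Theta_aux g w.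
Proof.
elim: f g w => [|f IH] [|g] w; try by case: w.
have [->//|/split_at_min[a [m [b [-> gt_a ge_b]]]]] := eqVneq w [::].
rewrite !Theta_aux_cat_min // size_cat /= => le_f le_g.
by congr (_ ++ _ :: _); apply: IH; rewrite ?size_compl; lia.
Qed.

Lemma Theta_cat_min a m b : {in a, forall y, m < y} -> {in b, forall y, m <= y} ->
  Theta (a ++ m :: b) = Theta (compl a) ++ m :: Theta b.
Proof.
move=> gt_a ge_b; rewrite /Theta size_cat /= addnS Theta_aux_cat_min //.
by congr (_ ++ _ :: _); apply: Theta_aux_fuel; rewrite ?size_compl; lia.
Qed.

Lemma size_Theta w : size (Theta w) = size w.
Proof.
elim/min_split_ind: w => // a m b gt_a ge_b IHa IHb.
by rewrite Theta_cat_min // !size_cat /= IHa IHb size_compl.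
Qed.

Lemma mem_Theta w y : y \in Theta w -> y \in w.
Proof.
elim/min_split_ind: w y => // a m b gt_a ge_b IHa IHb y.
rewrite Theta_cat_min // !mem_cat !inE => /or3P[/IHa/mem_compl->|->|/IHb->] //.
all: by rewrite ?orbT.
Qed.

Lemma even_height_Theta w : uniq w ->
  forall i, i < size w -> ~~ odd (height (Theta w) i) = des w i.
Proof.
elim/min_split_ind: w => // a m b gt_a ge_b IHa IHb.
rewrite cat_uniq /= => /and3P[ua _ /andP[_ ub]] i; rewrite Theta_cat_min //.
set t := Theta (compl a); set u := Theta b.
have gt_t : {in t, forall y, m < y} by move=> y /mem_Theta/mem_compl/gt_a.
have ge_u : {in u, forall y, m <= y} by move=> y /mem_Theta/ge_b.
have size_t : size t = size a by rewrite size_Theta size_compl.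
have size_u : size u = size b by rewrite size_Theta.
rewrite size_cat /= => lt_i; case: (ltngtP i (size a)) => [lt_ia|gt_ia|->].
- by rewrite height_catl ?size_t // des_catl // -IHa ?compl_uniq ?size_compl //= negbK.
- have lt_j : i - (size a).+1 < size b by lia.
  rewrite -(subnKC gt_ia); move: (i - _) lt_j => j lt_j.
  by rewrite des_catr -size_t height_catr ?size_u ?IHb.
- by rewrite (des_cat_min a ge_b) -size_t height_cat_min.
Qed.

Lemma DesE w : Des w = [seq i <- iota 1 (size w) | des w i.-1].
Proof.
rewrite /Des; case E: (size w) => [//|n]; rewrite -[n.+1]addn1 iotaD filter_cat /=.
rewrite addn1 add0n [des w n]/des E ltnn cats0.
apply: eq_in_filter => i; rewrite mem_iota /des E => /andP[i_gt0 lt_i].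
by rewrite prednK // (_ : i < n.+1) //; lia.
Qed.

Theorem theorem8p1 (n : nat) (pi : seq nat) :
  perm_eq pi (iota 1 n) -> EV (Theta pi) = Des pi.
Proof.
move=> /perm_uniq; rewrite iota_uniq => uniq_pi.
rewrite /EV DesE size_Theta; apply: eq_in_filter => i.
by rewrite mem_iota add1n => /andP[i_gt0 lt_i]; rewrite even_height_Theta // -ltnS prednK.
Qed.
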